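(* Fix $\delta\le 1/T$ and, for each context $\mathbf{z}$, a set $\mathcal{E}_{\mathbf{z}}=\mathcal{E}_{\mathbf{z}}(\delta)$ of $\delta$-approximate extreme points. For any sequence of contexts $\mathbf{z}_1,\ldots,\mathbf{z}_T$, any sequence of followers $f_1,\ldots,f_T$ and any leader policy $\pi$, there exists a policy $\pi^{(\mathcal{E})}:\mathcal{Z}\to\bigcup_{\mathbf{z}\in\mathcal{Z}}\mathcal{E}_{\mathbf{z}}$ with $\pi^{(\mathcal{E})}(\mathbf{z})\in\mathcal{E}_{\mathbf{z}}$ for every $\mathbf{z}$, such that $$\sum_{t=1}^T u(\mathbf{z}_t,\pi(\mathbf{z}_t),b_{f_t}(\mathbf{z}_t,\pi(\mathbf{z}_t)))-u(\mathbf{z}_t,\pi^{(\mathcal{E})}(\mathbf{z}_t),b_{f_t}(\mathbf{z}_t,\pi^{(\mathcal{E})}(\mathbf{z}_t)))\le 1.$$ Moreover, the same holds in expectation over any distribution $\mathcal{F}$ over follower types: for any contexts $\mathbf{z}_1,\dots,\mathbf{z}_T$ and any policy $\pi$ there is such a $\pi^{(\mathcal{E})}$ with $\sum_{t=1}^T\mathbb{E}_{f_t\sim\mathcal{F}}[u(\mathbf{z}_t,\pi(\mathbf{z}_t),b_{f_t}(\mathbf{z}_t,\pi(\mathbf{z}_t)))-u(\mathbf{z}_t,\pi^{(\mathcal{E})}(\mathbf{z}_t),b_{f_t}(\mathbf{z}_t,\pi^{(\mathcal{E})}(\mathbf{z}_t)))]\le 1$.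
   Context: Finite leader action set $\mathcal{A}$, finite follower action set $\mathcal{A}_f$, context space $\mathcal{Z}\subseteq\mathbb{R}^d$, follower types $\alpha^{(1)},\ldots,\alpha^{(K)}$ with utilities $u_{\alpha^{(i)}}:\mathcal{Z}\times\mathcal{A}\times\mathcal{A}_f\to[0,1]$, leader utility $u:\mathcal{Z}\times\mathcal{A}\times\mathcal{A}_f\to[0,1]$, mixed strategies $\mathbf{x}\in\mathcal{X}=\Delta(\mathcal{A})$, $u(\mathbf{z},\mathbf{x},a_f)=\sum_{a_l}\mathbf{x}[a_l]u(\mathbf{z},a_l,a_f)$. Best response: $b_f(\mathbf{z},\mathbf{x})\in\arg\max_{a_f}\sum_{a_l}\mathbf{x}[a_l]u_f(\mathbf{z},a_l,a_f)$, ties broken by a fixed known ordering over $\mathcal{A}_f$. A policy is a map $\mathcal{Z}\to\mathcal{X}$. For a type $\alpha^{(i)}$, action $a_f$ and context $\mathbf{z}$, $\mathcal{X}_{\mathbf{z}}(\alpha^{(i)},a_f)=\{\mathbf{x}\in\mathcal{X}:b_{\alpha^{(i)}}(\mathbf{z},\mathbf{x})=a_f\}$; for a function $\sigma:\{\alpha^{(1)},\ldots,\alpha^{(K)}\}\to\mathcal{A}_f$, the contextual best-response region is $\mathcal{X}_{\mathbf{z}}(\sigma)=\bigcap_{i\in[K]}\mathcal{X}_{\mathbf{z}}(\alpha^{(i)},\sigma(\alpha^{(i)}))$. $\delta$-approximate extreme points: for $\delta>0$ and context $\mathbf{z}$, $\mathcal{E}_{\mathbf{z}}(\delta)$ is a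 set of mixed strategies such that for every $\sigma$ with $\mathcal{X}_{\mathbf{z}}(\sigma)\neq\emptyset$ and every extreme point $\mathbf{x}$ of the closure $\mathrm{cl}(\mathcal{X}_{\mathbf{z}}(\sigma))$: if $\mathbf{x}\in\mathcal{X}_{\mathbf{z}}(\sigma)$ then $\mathbf{x}\in\mathcal{E}_{\mathbf{z}}(\delta)$; otherwise there is $\mathbf{x}'\in\mathcal{E}_{\mathbf{z}}(\delta)\cap\mathcal{X}_{\mathbf{z}}(\sigma)$ with $\|\mathbf{x}'-\mathbf{x}\|_1\le\delta$. *)

From HB Require Import structures.
From mathcomp Require Import all_boot all_order all_algebra.
From mathcomp Require Import reals.
Set Implicit Arguments. Unset Strict Implicit. Unset Printing Implicit Defensive.
Import Order.TTheory GRing.Theory Num.Theory.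
Local Open Scope ring_scope.

Section StackelbergDefs.
Variables (R : realType) (A Af : finType) (Zt : Type).

Definition mixed (x : {ffun A -> R}) : Prop :=
  (forall a, 0 <= x a) /\ \sum_a x a = 1.

Definition l1dist (x y : {ffun A -> R}) : R := \sum_a `|x a - y a|.

Definition mutil (v : Zt -> A -> Af -> R) (z : Zt) (x : {ffun A -> R}) (af : Af) : R :=
  \sum_a x a * v z a af.

(* Best response, ties broken by the fixed ordering ordAf (first maximizer in
   ordAf); af0 is only a default, never used when ordAf enumerates Af. *)
Definition best_resp (ordAf : seq Af) (af0 : Af) (uf : Zt -> A -> Af -> R)
    (z : Zt) (x : {ffun A -> R}) : Af :=
  head af0 [seq af <- ordAf | [forall b, mutil uf z x b <= mutil uf z x af]].

Definition br_region (ordAf : seq Af) (af0 : Af) (K : nat)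
    (alpha : 'I_K -> Zt -> A -> Af -> R) (z : Zt) (sigma : 'I_K -> Af)
    (x : {ffun A -> R}) : Prop :=
  mixed x /\ forall i, best_resp ordAf af0 (alpha i) z x = sigma i.

Definition closure_l1 (S : {ffun A -> R} -> Prop) (x : {ffun A -> R}) : Prop :=
  forall e : R, 0 < e -> exists y, S y /\ l1dist x y < e.

Definition extreme_point (S : {ffun A -> R} -> Prop) (x : {ffun A -> R}) : Prop :=
  S x /\ forall (y w : {ffun A -> R}) (l : R), S y -> S w -> 0 < l < 1 ->
    (forall a, x a = l * y a + (1 - l) * w a) -> y = w.

Definition approx_extreme (ordAf : seq Af) (af0 : Af) (K : nat)
    (alpha : 'I_K -> Zt -> A -> Af -> R) (z : Zt) (delta : R)
    (E : {ffun A -> R} -> Prop) : Prop :=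
  (forall x, E x -> mixed x) /\
  forall sigma : 'I_K -> Af,
    (exists x, br_region ordAf af0 alpha z sigma x) ->
    forall x, extreme_point (closure_l1 (br_region ordAf af0 alpha z sigma)) x ->
      (br_region ordAf af0 alpha z sigma x -> E x) /\
      (~ br_region ordAf af0 alpha z sigma x ->
         exists x', E x' /\ br_region ordAf af0 alpha z sigma x' /\ l1dist x' x <= delta).

End StackelbergDefs.

From HB Require Import structures.
From mathcomp Require Import all_boot all_order all_algebra.
From mathcomp Require Import reals ring lra.
From mathcomp Require Import boolp classical_sets topology normedtype matrix_normedtype derive.
Set Implicit Arguments. Unset Strict Implicit. Unset Printing Implicit Defensive.
Import Order.TTheory GRing.Theory Num.Def Num.Theory.
Import numFieldTopology.Exports numFieldNormedType.Exports.
Local Open Scope ring_scope.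

(* Fix a context z and the follower responses sigma induced by pi(z).  On the
   best-response region X_z(sigma) the responses are frozen, so the leader's
   total utility over the rounds with context z is linear in x, with weight
   vector C summing the utilities of these rounds.  On the compact set
   cl(X_z(sigma)), a maximiser of this linear function which also maximises
   the strictly convex |x|^2 among maximisers is an extreme point; hence it is
   in E_z, or some x' in E_z and X_z(sigma) is delta-close to it in l1.  The
   point x' induces the same responses as pi(z), and since utilities lie in
   [0, 1] it loses at most delta per round with respect to the maximiser,
   which is itself no worse than pi(z): the total loss is T delta <= 1. *)

Section L1Geometry.
Variables (R : realType) (A : finType).
Implicit Types (x y w : {ffun A -> R}) (g : A -> R).

Definition dot x g : R := \sum_a x a * g a.

Lemma l1distxx x : l1dist x x = 0.
Proof. by rewrite /l1dist big1 // => a _; rewrite subrr normr0. Qed.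

Lemma l1dist_triangle x y w : l1dist x w <= l1dist x y + l1dist y w.
Proof.
rewrite /l1dist -big_split /=; apply: ler_sum => a _.
by rewrite -[x a - w a](subrKA (y a)) ler_normD.
Qed.

Lemma l1distC x y : l1dist x y = l1dist y x.
Proof. by apply: eq_bigr => a _; rewrite distrC. Qed.

Lemma ler_dist_l1dist x y a : `|x a - y a| <= l1dist x y.
Proof. by rewrite /l1dist (bigD1 a) //= lerDl sumr_ge0. Qed.

Lemma dotB_le_l1dist x y g : (forall a, `|g a| <= 1) -> dot x g - dot y g <= l1dist x y.
Proof.
move=> g1; rewrite /dot -sumrB; apply: ler_sum => a _.
rewrite -mulrBl; apply: le_trans (ler_norm _) _.
by rewrite normrM ler_piMr.
Qed.

Lemma dotZr x k g : dot x (fun a => k * g a) = k * dot x g.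
Proof. by rewrite /dot mulr_sumr; apply: eq_bigr => a _; rewrite mulrCA. Qed.

Lemma dot_sumr (I : finType) (P : pred I) (F : I -> A -> R) x :
  dot x (fun a => \sum_(i | P i) F i a) = \sum_(i | P i) dot x (F i).
Proof. by rewrite /dot exchange_big; apply: eq_bigr => a _; rewrite mulr_sumr. Qed.

Lemma mixed_norm_le1 x a : mixed x -> `|x a| <= 1.
Proof.
move=> [x0 <-]; rewrite ger0_norm // (bigD1 a) //= lerDl.
by apply: sumr_ge0 => b _.
Qed.

Lemma closure_l1_sub (X : {ffun A -> R} -> Prop) x : X x -> closure_l1 X x.
Proof. by move=> Xx e e0; exists x; rewrite l1distxx. Qed.

Lemma lexmax_extreme_point (S : {ffun A -> R} -> Prop) g xs :
  S xs -> (forall y, S y -> dot y g <= dot xs g) ->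
  (forall y, S y -> dot y g = dot xs g -> dot y y <= dot xs xs) ->
  extreme_point S xs.
Proof.
move=> Sxs gmax hmax; split => // y w l Sy Sw /andP[l0 l1] xsE.
have gE : dot xs g = l * dot y g + (1 - l) * dot w g.
  by rewrite /dot !mulr_sumr -big_split /=; apply: eq_bigr => a _; rewrite xsE; ring.
have gy : dot y g = dot xs g.
  by apply/eqP; rewrite eq_le gmax //=; have := gmax w Sw; nra.
have gw : dot w g = dot xs g.
  by apply/eqP; rewrite eq_le gmax //=; have := gmax y Sy; nra.
have hE : l * dot y y + (1 - l) * dot w w - dot xs xs
          = l * (1 - l) * \sum_a (y a - w a) ^+ 2.
  rewrite /dot mulr_sumr !mulr_sumr -big_split -sumrB /=.
  by apply: eq_bigr => a _; rewrite !xsE; ring.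
have sq0 : \sum_a (y a - w a) ^+ 2 = 0.
  apply/eqP; rewrite eq_le sumr_ge0 ?andbT => [|a _]; last exact: sqr_ge0.
  have := hmax y Sy gy; have := hmax w Sw gw.
  have : 0 < l * (1 - l) by rewrite mulr_gt0 // subr_gt0.
  by nra.
apply/ffunP => a; apply/eqP; rewrite -subr_eq0 -sqrf_eq0.
by rewrite (psumr_eq0P (fun a _ => sqr_ge0 (y a - w a)) sq0).
Qed.

End L1Geometry.

(* {ffun A -> R} carries no topology: we work in 'rV_#|A|, with the sup norm. *)
Section RowEmbedding.
Variables (R : realType) (A : finType).
Local Notation vec := 'rV[R]_#|A|.

Definition ffun_of_row (v : vec) : {ffun A -> R} := [ffun a => v ord0 (enum_rank a)].
Definition row_of_ffun (x : {ffun A -> R}) : vec := \row_j x (enum_val j).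

Lemma row_of_ffunK : cancel row_of_ffun ffun_of_row.
Proof. by move=> x; apply/ffunP => a; rewrite !ffunE mxE enum_rankK. Qed.

Lemma ler_coord_mx_norm (v : vec) j : `|v ord0 j| <= `|v|.
Proof.
rewrite [leRHS]/normr /= mx_normrE; apply/bigmax_geP; right.
by exists (ord0, j).
Qed.

Lemma mx_norm_le (v : vec) M : 0 <= M -> (forall j, `|v ord0 j| <= M) -> `|v| <= M.
Proof.
move=> M0 vM; rewrite /normr /= mx_normrE; apply: bigmax_le => // [[i j]] _ /=.
by rewrite (ord1 i).
Qed.

Lemma l1dist_ffun_of_row (v w : vec) :
  l1dist (ffun_of_row v) (ffun_of_row w) <= #|A|%:R * `|v - w|.
Proof.
rewrite mulr_natl -sumr_const; apply: ler_sum => a _.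
by rewrite !ffunE; have := ler_coord_mx_norm (v - w) (enum_rank a); rewrite !mxE.
Qed.

Lemma continuous_ffun_of_row a : continuous (fun v : vec => ffun_of_row v a).
Proof.
by move=> v; rewrite /ffun_of_row; under eq_fun do rewrite ffunE; exact: coord_continuous.
Qed.

End RowEmbedding.

Section LexicographicMaximum.
Local Open Scope classical_set_scope.
Variables (R : realType) (T : topologicalType).

Lemma compact_lexmax (f h : T -> R) (S : set T) :
  S !=set0 -> compact S -> continuous f -> continuous h ->
  exists2 c, S c & (forall t, S t -> f t <= f c) /\
                   (forall t, S t -> f t = f c -> h t <= h c).
Proof.
move=> S0 Sc fC hC.
have [c1 /set_mem Sc1 c1max] := compact_EVT_max S0 Sc (continuous_subspaceT fC).
pose S1 := S `&` f @^-1` [set f c1].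
have S1c : compact S1.
  apply: compact_closedI => //.
  by apply: preimage_closed => [t _|]; [exact: fC | exact: closed_eq].
have [c2 /set_mem [Sc2 fc2] c2max] :
    exists2 c2, c2 \in S1 & forall t, t \in S1 -> h t <= h c2.
  exact: compact_EVT_max (ex_intro _ c1 (conj Sc1 erefl)) S1c (continuous_subspaceT hC).
exists c2 => //; split => [t St | t St ftc2].
  by rewrite fc2 c1max ?inE.
by apply: c2max; rewrite inE; split => //; rewrite /= ftc2.
Qed.

End LexicographicMaximum.

Section CompactClosure.
Local Open Scope classical_set_scope.
Variables (R : realType) (A : finType).
Implicit Types (X : {ffun A -> R} -> Prop) (g : A -> R).
Local Notation vec := 'rV[R]_#|A|.

Lemma closed_closure_l1 X : closed [set v : vec | closure_l1 X (ffun_of_row v)].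
Proof.
move=> v clv e e0.
pose r := e / 2 / (#|A|%:R + 1).
have r0 : 0 < r by rewrite !divr_gt0 // ltr_wpDl.
have [w [/= Xw /= vw]] := clv (ball v r) (nbhsx_ballx v r r0).
have [y [Xy wy]] := Xw (e / 2) (divr_gt0 e0 (ltr0Sn _ 1)).
exists y; split => //.
apply: le_lt_trans (l1dist_triangle _ (ffun_of_row w) _) _.
rewrite [ltRHS](splitr e) ler_ltD // (le_trans (l1dist_ffun_of_row v w)) //.
rewrite -ball_normE /= in vw.
apply: le_trans (ler_wpM2l (ler0n _ _) (ltW vw)) _.
rewrite /r mulrCA ler_piMr ?divr_ge0 ?ltW //.
by rewrite ltr_pdivrMr ?ltr_wpDl // mul1r ltrDl.
Qed.

Lemma bounded_closure_l1 X M : (forall x a, X x -> `|x a| <= M) ->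
  bounded_set [set v : vec | closure_l1 X (ffun_of_row v)].
Proof.
move=> XM; exists (`|M| + 1); split=> [|N MN v clv]; first exact: num_real.
have N0 : 0 <= N by apply: le_trans (ltW MN); rewrite addr_ge0.
apply: mx_norm_le => // j.
have [y [Xy vy]] := clv 1 ltr01.
have -> : v ord0 j = ffun_of_row v (enum_val j) by rewrite ffunE enum_valK.
rewrite -[ffun_of_row v _](subrK (y (enum_val j))).
apply: le_trans (ler_normD _ _) (le_trans _ (ltW MN)).
rewrite addrC lerD ?(le_trans (XM _ _ Xy)) ?ler_norm //.
exact: le_trans (ler_dist_l1dist _ _ _) (ltW vy).
Qed.

Lemma continuous_dot_ffun_of_row (k : vec -> A -> R) :
  (forall a, continuous (k ^~ a)) ->
  continuous (fun v : vec => dot (ffun_of_row v) (k v)).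
Proof.
move=> kC; apply: continuous_big; first exact: add_continuous.
by move=> a _ v; apply: continuousM; [exact: continuous_ffun_of_row | exact: kC].
Qed.

Lemma exists_extreme_point_ge X M g p :
  (forall x a, X x -> `|x a| <= M) -> X p ->
  exists2 xs, extreme_point (closure_l1 X) xs & dot p g <= dot xs g.
Proof.
move=> XM Xp; pose S := [set v : vec | closure_l1 X (ffun_of_row v)].
have Scompact : compact S.
  exact: bounded_closed_compact (bounded_closure_l1 XM) (@closed_closure_l1 X).
have Sp : S (row_of_ffun p) by rewrite /S /= row_of_ffunK; exact: closure_l1_sub.
have [c Sc [cmax ctie]] := compact_lexmax (ex_intro _ _ Sp) Scompact
  (continuous_dot_ffun_of_row (fun a => @cst_continuous _ _ (g a)))
  (continuous_dot_ffun_of_row (@continuous_ffun_of_row R A)).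
have Srow y : closure_l1 X y -> S (row_of_ffun y) by rewrite /S /= row_of_ffunK.
exists (ffun_of_row c); last by have := cmax _ Sp; rewrite row_of_ffunK.
apply: (lexmax_extreme_point (g := g)) => // y /Srow Sy.
  by have := cmax _ Sy; rewrite row_of_ffunK.
by have := ctie _ Sy; rewrite row_of_ffunK.
Qed.

End CompactClosure.

Lemma natr_mul_le1 (R : realFieldType) (T : nat) (delta : R) :
  delta <= T%:R^-1 -> T%:R * delta <= 1.
Proof.
move=> deltaT; have [->|T0] := posnP T; first by rewrite mul0r.
rewrite -[leRHS](@mulfV _ T%:R) ?pnatr_eq0 -?lt0n //; exact: ler_wpM2l.
Qed.

Lemma sumr_le0_fibers (R : realType) (I : finType) (Zt : eqType) (zs : I -> Zt)
    (D : I -> R) :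
  (forall s, \sum_(t | zs t == zs s) D t <= 0) -> \sum_t D t <= 0.
Proof.
move=> fiber_le0.
pose rep t : option I := [pick s | zs s == zs t].
have repE t s : (rep t == rep s) = (zs t == zs s).
  apply/eqP/eqP => [|e]; rewrite /rep; last by rewrite e.
  case: pickP => [t' /eqP <-|/(_ t)]; last by rewrite eqxx.
  by case: pickP => [s' /eqP <- [->]|/(_ s)]; last by rewrite eqxx.
rewrite (partition_big rep xpredT) //=; apply: sumr_le0 => j _.
case: (pickP [pred t | rep t == j]) => [t0 /eqP <-|none].
  by rewrite (eq_bigl (fun t => zs t == zs t0)) // => t; rewrite repE.
by rewrite big_pred0.
Qed.

Section Rounding.
Variables (R : realType) (A Af : finType) (ordAf : seq Af) (af0 : Af) (K : nat).

Section Context.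
Variables (Zt : Type) (alpha : 'I_K -> Zt -> A -> Af -> R).
Local Notation br i z x := (best_resp ordAf af0 (alpha i) z x).

Lemma approx_extreme_round z delta Ez (p : {ffun A -> R}) (g : A -> R) :
  0 <= delta -> approx_extreme ordAf af0 alpha z delta Ez -> mixed p ->
  exists x' xs, [/\ Ez x', forall i, br i z x' = br i z p,
                    dot p g <= dot xs g & l1dist xs x' <= delta].
Proof.
move=> delta0 [_ Eext] mixed_p.
pose sigma i := br i z p.
pose X := br_region ordAf af0 alpha z sigma.
have Xp : X p by [].
have [xs ext_xs gp] := exists_extreme_point_ge g
  (fun x a (Xx : X x) => mixed_norm_le1 a Xx.1) Xp.
have [Exs Enear] := Eext sigma (ex_intro _ p Xp) xs ext_xs.
have [Xxs|notXxs] := pselect (X xs).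
  by exists xs, xs; split; [exact: Exs | exact: Xxs.2 | | rewrite l1distxx].
have [x' [Ex' [Xx' x'xs]]] := Enear notXxs.
by exists x', xs; split; [| exact: Xx'.2 | | rewrite l1distC].
Qed.

End Context.

Variables (Zt : eqType) (alpha : 'I_K -> Zt -> A -> Af -> R).
Local Notation br i z x := (best_resp ordAf af0 (alpha i) z x).

Lemma exists_rounded_policy (T : nat) (Z : Zt -> Prop) delta
    (E : Zt -> {ffun A -> R} -> Prop) (zs : 'I_T -> Zt) (pi : Zt -> {ffun A -> R})
    (c : 'I_T -> A -> R) :
  0 <= delta -> (forall z, Z z -> approx_extreme ordAf af0 alpha z delta (E z)) ->
  (forall t, Z (zs t)) -> (forall z, Z z -> mixed (pi z)) ->
  (forall t a, `|c t a| <= 1) ->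
  exists piE : Zt -> {ffun A -> R},
    [/\ forall z, Z z -> E z (piE z),
        forall z i, Z z -> br i z (piE z) = br i z (pi z) &
        \sum_t (dot (pi (zs t)) (c t) - dot (piE (zs t)) (c t)) <= T%:R * delta].
Proof.
move=> delta0 Eapprox Zzs mixed_pi c1.
pose C z a := \sum_(t | zs t == z) c t a.
have /choice[F Fz] : forall z, exists q : {ffun A -> R} * {ffun A -> R}, Z z ->
    [/\ E z q.1, forall i, br i z q.1 = br i z (pi z),
        dot (pi z) (C z) <= dot q.2 (C z) & l1dist q.2 q.1 <= delta].
  move=> z; have [Zz|] := pselect (Z z); last by exists (pi z, pi z).
  have [x' [xs Hz]] := approx_extreme_round (C z) delta0 (Eapprox z Zz) (mixed_pi z Zz).
  by exists (x', xs).
exists (fun z => (F z).1); split=> [z /Fz[] // | z i /Fz[] // |].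
pose xs z := (F z).2.
rewrite (eq_bigr (fun t => (dot (pi (zs t)) (c t) - dot (xs (zs t)) (c t))
                         + (dot (xs (zs t)) (c t) - dot (F (zs t)).1 (c t)))); last first.
  by move=> t _; rewrite addrA subrK.
rewrite big_split -[T%:R * delta]add0r /=; apply: lerD.
  apply: (sumr_le0_fibers (zs := zs)) => s; rewrite sumrB subr_le0.
  have fiberE (x : Zt -> {ffun A -> R}) :
      \sum_(t | zs t == zs s) dot (x (zs t)) (c t) = dot (x (zs s)) (C (zs s)).
    by rewrite dot_sumr; apply: eq_bigr => t /eqP ->.
  by rewrite !fiberE; have [] := Fz _ (Zzs s).
rewrite mulr_natl -[in X in _ <= X](card_ord T) -sumr_const; apply: ler_sum => t _.
by apply: le_trans (dotB_le_l1dist _ _ (c1 t)) _; have [] := Fz _ (Zzs t).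
Qed.

End Rounding.

Theorem mainTheorem2 (R : realType) (A Af : finType) (ordAf : seq Af) (af0 : Af)
    (d K T : nat) (Z : 'rV[R]_d -> Prop)
    (u : 'rV[R]_d -> A -> Af -> R) (alpha : 'I_K -> 'rV[R]_d -> A -> Af -> R)
    (delta : R) (E : 'rV[R]_d -> {ffun A -> R} -> Prop) :
  perm_eq ordAf (enum Af) ->
  (forall z a af, Z z -> 0 <= u z a af <= 1) ->
  (forall i z a af, Z z -> 0 <= alpha i z a af <= 1) ->
  0 < delta -> delta <= (T%:R)^-1 ->
  (forall z, Z z -> approx_extreme ordAf af0 alpha z delta (E z)) ->
  (forall (zs : 'I_T -> 'rV[R]_d) (f : 'I_T -> 'I_K) (pi : 'rV[R]_d -> {ffun A -> R}),
     (forall t, Z (zs t)) -> (forall z, Z z -> mixed (pi z)) ->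
     exists piE : 'rV[R]_d -> {ffun A -> R},
       (forall z, Z z -> E z (piE z)) /\
       \sum_(t < T)
          (mutil u (zs t) (pi (zs t))
                 (best_resp ordAf af0 (alpha (f t)) (zs t) (pi (zs t)))
           - mutil u (zs t) (piE (zs t))
                 (best_resp ordAf af0 (alpha (f t)) (zs t) (piE (zs t)))) <= 1)
  /\
  (forall (zs : 'I_T -> 'rV[R]_d) (p : 'I_K -> R) (pi : 'rV[R]_d -> {ffun A -> R}),
     (forall t, Z (zs t)) -> (forall i, 0 <= p i) -> \sum_(i < K) p i = 1 ->
     (forall z, Z z -> mixed (pi z)) ->
     exists piE : 'rV[R]_d -> {ffun A -> R},
       (forall z, Z z -> E z (piE z)) /\
       \sum_(t < T) \sum_(i < K)
          p i * (mutil u (zs t) (pi (zs t))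
                   (best_resp ordAf af0 (alpha i) (zs t) (pi (zs t)))
                 - mutil u (zs t) (piE (zs t))
                   (best_resp ordAf af0 (alpha i) (zs t) (piE (zs t)))) <= 1).
Proof.
move=> _ u01 _ delta0 deltaT Eapprox.
have Tdelta : T%:R * delta <= 1 := natr_mul_le1 deltaT.
have u_bounds z a af : Z z -> 0 <= u z a af /\ u z a af <= 1 by move/(u01 z a af)/andP.
split=> [zs f pi Zzs mixed_pi | zs p pi Zzs p0 p1 mixed_pi].
  pose b t := best_resp ordAf af0 (alpha (f t)) (zs t) (pi (zs t)).
  pose c t a := u (zs t) a (b t).
  have c1 t a : `|c t a| <= 1.
    by have [u0 u1] := u_bounds _ a (b t) (Zzs t); rewrite ger0_norm.
  have [piE [EpiE brE loss]] :=
    exists_rounded_policy (ltW delta0) Eapprox Zzs mixed_pi c1.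
  exists piE; split=> //; under eq_bigr => t _ do rewrite brE //.
  exact: le_trans loss Tdelta.
pose c t a := \sum_i p i * u (zs t) a (best_resp ordAf af0 (alpha i) (zs t) (pi (zs t))).
have c1 t a : `|c t a| <= 1.
  rewrite ger0_norm ?sumr_ge0 -?p1 ?ler_sum // => i _.
    by rewrite ler_piMr // (u_bounds _ _ _ (Zzs t)).2.
  by rewrite mulr_ge0 // (u_bounds _ _ _ (Zzs t)).1.
have [piE [EpiE brE loss]] := exists_rounded_policy (ltW delta0) Eapprox Zzs mixed_pi c1.
exists piE; split=> //.
rewrite (eq_bigr (fun t => dot (pi (zs t)) (c t) - dot (piE (zs t)) (c t))).
  exact: le_trans loss Tdelta.
move=> t _; rewrite /c !dot_sumr -sumrB.
by apply: eq_bigr => i _; rewrite !dotZr -mulrBr brE.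
Qed.
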